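(* Let $n\ge 2$ and let $A_1,\dots,A_{2^n}$ be the vertices $(\pm\tfrac12,\dots,\pm\tfrac12)$ of a cube in $\mathbb R^n$ centred at the origin $O$. Let $\Gamma$ be the sphere of radius $r>0$ centred at $O$, let $D=\{\tfrac{r}{\sqrt n}(\varepsilon_1,\dots,\varepsilon_n):\varepsilon_j\in\{1,-1\}\}$ (the points where the rays $OA_i$ meet $\Gamma$) and $E=\{\pm r\mathbf e_i:1\le i\le n\}$ (the points where the perpendiculars from $O$ to the facets of the cube meet $\Gamma$), where $\mathbf e_1,\dots,\mathbf e_n$ is the standard basis. Fix $h\ge0$ and put $H_n(M,\lambda)=\sum_{i=1}^{2^n}(|MA_i|^2+h)^{\lambda/2}$ for $M\in\Gamma$. Then: (1) If $\lambda<0$: the minimum of $H_n(\cdot,\lambda)$ on $\Gamma$ is attained precisely at the points of $E$, and, unless $h=0$ and $\Gamma$ is the circumscribed sphere of the cube (i.e. $r=\sqrt n/2$, in which case $H_n(\cdot,\lambda)$ is unbounded), the maximum is attained precisely at the points of $D$. (2) If $\lambda\in\{0,2,4,6\}$, $H_n(M,\lambda)$ is independent of $M\in\Gamma$; these are the only real $\lambda$ with this property. If $\lambda\in(0,2)\cup(4,6)$, the maximum is attained precisely at the points of $E$ and the minimum precisely at the points of $D$. If $\lambda\in(2,4)$, the minimum is attained precisely at the points of $E$ and the maximum precisely at the points of $D$. (3) If $\lambda>6$: the maximum is attained precisely at the points of $D$ and the minimum precisely at the points of $E$.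
   Context: $|MA|$ denotes Euclidean distance. *)

From Stdlib Require Import Reals Lra.
Open Scope R_scope.

(* Points of R^n are functions nat -> R; only coordinates 0..n-1 matter. *)

Fixpoint rsum (k : nat) (f : nat -> R) : R :=
  match k with
  | O => 0
  | S k' => rsum k' f + f k'
  end.

(* The i-th cube vertex A_i (i = 0 .. 2^n - 1): coordinate j is +1/2 if bit j
   of i is set, -1/2 otherwise.  This enumerates all (±1/2,...,±1/2). *)
Definition vert (i : nat) (j : nat) : R :=
  if Nat.testbit i j then / 2 else - / 2.

Definition dist2 (n : nat) (x y : nat -> R) : R :=
  rsum n (fun j => (x j - y j) ^ 2).

Definition on_sphere (n : nat) (r : R) (M : nat -> R) : Prop :=
  rsum n (fun j => M j ^ 2) = r ^ 2.

(* real power x^y for x >= 0: Rpower for x > 0, and 0^y = 0 (y>0), 0^0 = 1.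
   (0^y for y < 0 is excluded by the domain predicate below.) *)
Definition rpow (x y : R) : R :=
  if Rlt_dec 0 x then Rpower x y
  else if Rlt_dec 0 y then 0 else 1.

Definition Hn (n : nat) (h lam : R) (M : nat -> R) : R :=
  rsum (2 ^ n) (fun i => rpow (dist2 n M (vert i) + h) (lam / 2)).

(* M is in Gamma and H_n(M,lam) is a (finite) real number *)
Definition Hdom (n : nat) (r h lam : R) (M : nat -> R) : Prop :=
  on_sphere n r M /\
  (0 <= lam \/ forall i, (i < 2 ^ n)%nat -> 0 < dist2 n M (vert i) + h).

Definition is_min_at (n : nat) (r h lam : R) (M : nat -> R) : Prop :=
  Hdom n r h lam M /\ forall N, Hdom n r h lam N -> Hn n h lam M <= Hn n h lam N.

Definition is_max_at (n : nat) (r h lam : R) (M : nat -> R) : Prop :=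
  Hdom n r h lam M /\ forall N, Hdom n r h lam N -> Hn n h lam N <= Hn n h lam M.

Definition in_D (n : nat) (r : R) (M : nat -> R) : Prop :=
  forall j, (j < n)%nat -> M j = r / sqrt (INR n) \/ M j = - (r / sqrt (INR n)).

Definition in_E (n : nat) (r : R) (M : nat -> R) : Prop :=
  exists i, (i < n)%nat /\ exists s, (s = 1 \/ s = -1) /\
    forall j, (j < n)%nat -> M j = (if Nat.eqb j i then s * r else 0).

From Stdlib Require Import Reals Lra Lia List Permutation Classical.
From Coquelicot Require Import Coquelicot.
Open Scope R_scope.

(* Since A_i = e/2 for a sign vector e, |M A_i|^2 = |M|^2 + n/4 - e.M, so on Gamma
   H_n is a sign sum  S_w(c; x) = sum_e w (c + e_1 x_1 + ... + e_n x_n)  of the weight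
   w(t) = t^(lam/2) around c = r^2 + n/4 + h, x being the coordinates of M.  S_w is symmetric
   and even in the x_i, and summing out two coordinates x, y leaves a four-point weight.
   Analytic core: when w''' increases strictly on (0, +oo), this four-point weight
   increases strictly with |x y| for fixed x^2 + y^2.  Hence concentrating the Euclidean
   mass on one coordinate strictly decreases S_w (the minimum is exactly E) and equalising
   the moduli strictly increases it (the maximum is exactly D).  For w = s t^k, k = lam/2,
   w''' increases when s k(k-1)(k-2)(k-3) > 0; choosing s = 1 or s = -1 gives the extremal
   points in (1)-(3).  For lam in {0, 2, 4, 6} the weight is a polynomial of degree <= 3,
   whose sign sums only depend on |M|; for the other lam, E is the exact set of minimisers
   of s H_n, which separates E from the point (3r/5, 4r/5, 0, ...).  In the degenerate case
   points of Gamma near a vertex make H_n unbounded for lam < 0. *)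

Lemma rsum_ext k f g : (forall j, (j < k)%nat -> f j = g j) -> rsum k f = rsum k g.
Proof.
  induction k as [|k IH]; intros H; simpl; auto.
  rewrite IH by (intros; apply H; lia). rewrite H by lia; auto.
Qed.

Lemma rsum_plus k f g : rsum k (fun j => f j + g j) = rsum k f + rsum k g.
Proof. induction k; simpl; lra. Qed.

Lemma rsum_minus k f g : rsum k (fun j => f j - g j) = rsum k f - rsum k g.
Proof. induction k; simpl; lra. Qed.

Lemma rsum_const k c : rsum k (fun _ => c) = INR k * c.
Proof. induction k as [|k IH]; simpl rsum; [simpl; lra|]. rewrite IH, S_INR; lra. Qed.

Lemma rsum_le k f g : (forall j, (j < k)%nat -> f j <= g j) -> rsum k f <= rsum k g.
Proof.
  induction k as [|k IH]; intros H; simpl; [lra|].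
  pose proof (H k ltac:(lia)); pose proof (IH ltac:(intros; apply H; lia)); lra.
Qed.

Lemma rsum_add_range a b F : rsum (a + b) F = rsum a F + rsum b (fun i => F (a + i)%nat).
Proof.
  induction b as [|b IH]; simpl; [rewrite Nat.add_0_r; lra|].
  rewrite Nat.add_succ_r; simpl; rewrite IH; lra.
Qed.

Lemma rsum_split2 n F : (2 <= n)%nat ->
  rsum n F = F 0%nat + F 1%nat + rsum (n - 2) (fun i => F (2 + i)%nat).
Proof.
  intros H. replace n with (2 + (n - 2))%nat at 1 by lia. rewrite rsum_add_range. simpl; ring.
Qed.

Lemma rsum_single n i v : (i < n)%nat -> rsum n (fun j => if Nat.eqb j i then v else 0) = v.
Proof.
  induction n as [|n IH]; intros H; [lia|]. simpl rsum.
  destruct (Nat.eq_dec i n) as [->|Hne].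
  - rewrite Nat.eqb_refl, (rsum_ext n _ (fun _ => 0)), rsum_const; [ring|].
    intros j Hj; destruct (Nat.eqb_spec j n); [lia|auto].
  - rewrite IH by lia. destruct (Nat.eqb_spec n i); [lia|ring].
Qed.

Fixpoint sign_sum (w : R -> R) (c : R) (l : list R) : R :=
  match l with
  | nil => w c
  | x :: l' => sign_sum w (c - x) l' + sign_sum w (c + x) l'
  end.

Fixpoint sumsq (l : list R) : R :=
  match l with nil => 0 | x :: l' => x ^ 2 + sumsq l' end.

Fixpoint sumabs (l : list R) : R :=
  match l with nil => 0 | x :: l' => Rabs x + sumabs l' end.

Lemma sq_abs a : a ^ 2 = Rabs a ^ 2.
Proof. unfold Rabs; destruct (Rcase_abs a); ring. Qed.

Lemma sumsq_ge0 l : 0 <= sumsq l.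
Proof. induction l; simpl; nra. Qed.

Lemma sumabs_ge0 l : 0 <= sumabs l.
Proof. induction l; simpl; [lra|]. pose proof (Rabs_pos a); lra. Qed.

Lemma sumsq_perm l l' : Permutation l l' -> sumsq l = sumsq l'.
Proof. intros HP; induction HP; simpl; lra. Qed.

Lemma sqrt_sumsq_le_sumabs l : sqrt (sumsq l) <= sumabs l.
Proof.
  assert (Hsq : sumsq l <= sumabs l ^ 2).
  { induction l as [|a l IH]; simpl; [lra|].
    pose proof (sumabs_ge0 l); pose proof (Rabs_pos a); pose proof (sq_abs a); nra. }
  rewrite <- (sqrt_pow2 (sumabs l)) by apply sumabs_ge0.
  apply sqrt_le_1; auto using sumsq_ge0, pow2_ge_0.
Qed.

Lemma cauchy_schwarz_list l : sumabs l ^ 2 <= INR (length l) * sumsq l.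
Proof.
  induction l as [|a l IH]; cbn [length sumabs sumsq]; [simpl; lra|].
  rewrite S_INR, (sq_abs a).
  pose proof (sumabs_ge0 l); pose proof (sumsq_ge0 l); pose proof (pos_INR (length l)).
  pose proof (Rabs_pos a).
  set (m := INR (length l)) in *; set (A := Rabs a) in *;
  set (s := sumabs l) in *; set (q := sumsq l) in *.
  assert (Hcross : 2 * A * s <= m * A ^ 2 + q).
  { destruct (Req_dec m 0) as [Hm|Hm].
    - rewrite Hm in IH. assert (s = 0) by nra. subst s; nra.
    - apply Rmult_le_reg_l with m; [lra|]. pose proof (pow2_ge_0 (m * A - s)); nra. }
  nra.
Qed.

Lemma sign_sum_perm w c l l' : Permutation l l' -> sign_sum w c l = sign_sum w c l'.
Proof.
  intros HP; revert c; induction HP; intros c; simpl; auto.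
  - rewrite !IHHP; auto.
  - replace (c - y - x) with (c - x - y) by ring. replace (c - y + x) with (c + x - y) by ring.
    replace (c + y - x) with (c - x + y) by ring. replace (c + y + x) with (c + x + y) by ring.
    lra.
  - rewrite IHHP1, IHHP2; auto.
Qed.

Lemma sign_sum_opp w c x l : sign_sum w c (- x :: l) = sign_sum w c (x :: l).
Proof.
  simpl. replace (c - - x) with (c + x) by ring. replace (c + - x) with (c - x) by ring. lra.
Qed.

Lemma sign_sum_abs w c x l : sign_sum w c (Rabs x :: l) = sign_sum w c (x :: l).
Proof. unfold Rabs; destruct (Rcase_abs x); auto using sign_sum_opp. Qed.

Lemma sign_sum_scal s w c l : sign_sum (fun t => s * w t) c l = s * sign_sum w c l.
Proof. revert c; induction l; intros c; simpl; auto. rewrite !IHl; ring. Qed.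

(* The weight seen by the remaining coordinates once two coordinates x, y are summed out. *)
Definition pair_weight (w : R -> R) (x y t : R) : R :=
  w (t - x - y) + w (t - x + y) + w (t + x - y) + w (t + x + y).

Lemma sign_sum_pair w c x y l : sign_sum w c (x :: y :: l) = sign_sum (pair_weight w x y) c l.
Proof.
  revert c; induction l as [|z l IH]; intros c; [unfold pair_weight; simpl; lra|].
  rewrite (sign_sum_perm w c (x :: y :: z :: l) (z :: x :: y :: l)).
  - change (sign_sum w (c - z) (x :: y :: l) + sign_sum w (c + z) (x :: y :: l)
      = sign_sum (pair_weight w x y) c (z :: l)).
    rewrite !IH. reflexivity.
  - eapply perm_trans; [apply perm_skip, perm_swap | apply perm_swap].
Qed.

Lemma sign_sum_le f g c l : (forall t, c - sumabs l <= t -> f t <= g t) ->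
  sign_sum f c l <= sign_sum g c l.
Proof.
  revert c; induction l as [|x l IH]; intros c H; simpl in *; [apply H; lra|].
  pose proof (Rle_abs x); pose proof (Rle_abs (- x)); rewrite Rabs_Ropp in *.
  apply Rplus_le_compat; apply IH; intros t Ht; apply H; lra.
Qed.

Lemma sign_sum_lt f g c l : (forall t, c - sumabs l <= t -> f t < g t) ->
  sign_sum f c l < sign_sum g c l.
Proof.
  revert c; induction l as [|x l IH]; intros c H; simpl in *; [apply H; lra|].
  pose proof (Rle_abs x); pose proof (Rle_abs (- x)); rewrite Rabs_Ropp in *.
  apply Rplus_lt_compat; apply IH; intros t Ht; apply H; lra.
Qed.

Lemma sign_sum_eq_on f g c l : (forall t, c - sumabs l <= t -> f t = g t) ->
  sign_sum f c l = sign_sum g c l.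
Proof. intros H; apply Rle_antisym; apply sign_sum_le; intros t Ht; rewrite H; lra. Qed.

Lemma sign_sum_nonneg g c l : (forall t, 0 <= g t) -> 0 <= sign_sum g c l.
Proof.
  revert c; induction l; intros c H; simpl; auto.
  pose proof (IHl (c - a) H); pose proof (IHl (c + a) H); lra.
Qed.

Lemma sign_sum_ge_min g c l : (forall t, 0 <= g t) -> g (c - sumabs l) <= sign_sum g c l.
Proof.
  revert c; induction l as [|x l IH]; intros c H; simpl; [right; f_equal; ring|].
  pose proof (sign_sum_nonneg g (c - x) l H); pose proof (sign_sum_nonneg g (c + x) l H).
  unfold Rabs; destruct (Rcase_abs x).
  - pose proof (IH (c + x) H).
    replace (c - (- x + sumabs l)) with (c + x - sumabs l) by ring; lra.
  - pose proof (IH (c - x) H).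
    replace (c - (x + sumabs l)) with (c - x - sumabs l) by ring; lra.
Qed.

(* For polynomial weights of degree <= 3 the sign sum depends on l only through
   its length and [sumsq l]: the odd moments cancel. *)
Lemma sign_sum_deg0 c l : sign_sum (fun _ => 1) c l = 2 ^ length l.
Proof. revert c; induction l; intros c; simpl; auto. rewrite !IHl; ring. Qed.

Lemma sign_sum_deg1 c l : sign_sum (fun t => t) c l = 2 ^ length l * c.
Proof. revert c; induction l; intros c; simpl; [ring|]. rewrite !IHl; ring. Qed.

Lemma sign_sum_deg2 c l : sign_sum (fun t => t ^ 2) c l = 2 ^ length l * (c ^ 2 + sumsq l).
Proof. revert c; induction l; intros c; simpl; [ring|]. rewrite !IHl; ring. Qed.

Lemma sign_sum_deg3 c l :
  sign_sum (fun t => t ^ 3) c l = 2 ^ length l * (c ^ 3 + 3 * c * sumsq l).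
Proof. revert c; induction l; intros c; simpl; [ring|]. rewrite !IHl; ring. Qed.

Lemma is_derive_Rplus f g x a b :
  is_derive f x a -> is_derive g x b -> is_derive (fun y => f y + g y) x (a + b).
Proof. intros H1 H2; exact (is_derive_plus _ _ _ _ _ H1 H2). Qed.

Lemma is_derive_Rminus f g x a b :
  is_derive f x a -> is_derive g x b -> is_derive (fun y => f y - g y) x (a - b).
Proof. intros H1 H2; exact (is_derive_minus _ _ _ _ _ H1 H2). Qed.

Lemma is_derive_Rmult f g x a b : is_derive f x a -> is_derive g x b ->
  is_derive (fun y => f y * g y) x (a * g x + f x * b).
Proof. intros H1 H2; exact (is_derive_mult _ _ _ _ _ H1 H2 Rmult_comm). Qed.

Lemma is_derive_val (f : R -> R) (x a b : R) : is_derive f x a -> a = b -> is_derive f x b.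
Proof. intros H ->; auto. Qed.

Lemma is_derive_affine f D s x df :
  is_derive f (D + s * x) df -> is_derive (fun y => f (D + s * y)) x (s * df).
Proof.
  intros H.
  assert (Hg : @is_derive R_AbsRing R_NormedModule (fun y : R => D + s * y) x s)
    by (auto_derive; auto; ring).
  exact (is_derive_comp f (fun y => D + s * y) x df s H Hg).
Qed.

Lemma is_derive_sub_arg (f : R -> R) D x df :
  is_derive f (D - x) df -> is_derive (fun y => f (D - y)) x (- df).
Proof.
  intros H. apply is_derive_ext with (fun y => f (D + -1 * y)); [intros; f_equal; ring|].
  apply is_derive_val with (-1 * df); [|ring].
  apply is_derive_affine. replace (D + -1 * x) with (D - x) by ring; auto.
Qed.

Lemma is_derive_add_arg (f : R -> R) D x df :
  is_derive f (D + x) df -> is_derive (fun y => f (D + y)) x df.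
Proof.
  intros H. apply is_derive_ext with (fun y => f (D + 1 * y)); [intros; f_equal; ring|].
  apply is_derive_val with (1 * df); [|ring].
  apply is_derive_affine. replace (D + 1 * x) with (D + x) by ring; auto.
Qed.

Lemma is_derive_continuity_pt (f : R -> R) (x a : R) : is_derive f x a -> continuity_pt f x.
Proof.
  intros H. apply is_derive_Reals in H. apply derivable_continuous_pt. exists a; exact H.
Qed.

Lemma increasing_by_derivative f df a b : a < b ->
  (forall x, a < x < b -> is_derive f x (df x)) ->
  (forall x, a <= x <= b -> continuity_pt f x) ->
  (forall x, a < x < b -> 0 < df x) -> f a < f b.
Proof.
  intros Hab Hd Hc Hp.
  (* the mean value point may be an endpoint, where df' is set to 1 *)
  set (df' := fun x => if Rlt_dec a x then if Rlt_dec x b then df x else 1 else 1).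
  assert (Hpos : forall x, 0 < df' x).
  { intros x; unfold df'. destruct (Rlt_dec a x); [|lra]. destruct (Rlt_dec x b); [|lra].
    apply Hp; lra. }
  destruct (MVT_gen f a b df') as [c [_ Hmvt]]; rewrite ?Rmin_left, ?Rmax_right by lra.
  - intros x Hx. unfold df'. destruct (Rlt_dec a x); [|lra]. destruct (Rlt_dec x b); [|lra].
    apply Hd; lra.
  - auto.
  - assert (0 < df' c * (b - a)) by (apply Rmult_lt_0_compat; [apply Hpos | lra]). lra.
Qed.

(** Weights with an increasing third derivative. *)

Definition increasing_third_derivative (w : R -> R) : Prop :=
  exists w1 w2 w3 : R -> R,
    (forall d, 0 < d -> is_derive w d (w1 d)) /\
    (forall d, 0 < d -> is_derive w1 d (w2 d)) /\
    (forall d, 0 < d -> is_derive w2 d (w3 d)) /\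
    (forall a b, 0 < a -> a < b -> w3 a < w3 b).

(* The arguments of a weight stay at distance >= d from the origin, and d is either
   positive or zero with the weight continuous at 0. *)
Definition admissible_gap (w : R -> R) (d : R) : Prop :=
  0 < d \/ (0 <= d /\ continuity_pt w 0).

Lemma admissible_gap_mono w d d' : d <= d' -> admissible_gap w d -> admissible_gap w d'.
Proof. unfold admissible_gap; intros H [Hd | [Hd Hc]]; [left | right]; split || lra; auto; lra. Qed.

Definition even_part (f : R -> R) (D u : R) : R := f (D - u) + f (D + u).

(* If x^2 + y^2 = rho^2 and p = |x| + |y|, then ||x| - |y|| = sqrt (2 rho^2 - p^2); the
   four-point sum [pair_weight] is therefore a function of p alone (see [pair_weight_profile]). *)
Definition pair_profile (f : R -> R) (D rho p : R) : R :=
  even_part f D p + even_part f D (sqrt (2 * rho ^ 2 - p ^ 2)).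

Section IncreasingThirdDerivative.

Variables w w1 w2 w3 : R -> R.
Hypothesis Hw1 : forall d, 0 < d -> is_derive w d (w1 d).
Hypothesis Hw2 : forall d, 0 < d -> is_derive w1 d (w2 d).
Hypothesis Hw3 : forall d, 0 < d -> is_derive w2 d (w3 d).
Hypothesis Hw3_incr : forall a b, 0 < a -> a < b -> w3 a < w3 b.

(* chi(u) = u (w2(D+u) + w2(D-u)) - (w1(D+u) - w1(D-u)) vanishes at 0 and has derivative
   u (w3(D+u) - w3(D-u)) > 0. *)
Lemma odd_correction_pos D u : 0 < u < D ->
  0 < u * (w2 (D + u) + w2 (D - u)) - (w1 (D + u) - w1 (D - u)).
Proof.
  intros Hu.
  set (chi := fun s => s * (w2 (D + s) + w2 (D - s)) - (w1 (D + s) - w1 (D - s))).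
  assert (Hder : forall s, 0 <= s < D -> is_derive chi s (s * (w3 (D + s) - w3 (D - s)))).
  { intros s Hs. unfold chi. eapply is_derive_val.
    - apply is_derive_Rminus; [apply is_derive_Rmult; [apply is_derive_id |] |].
      + apply is_derive_Rplus; [apply is_derive_add_arg | apply is_derive_sub_arg]; apply Hw3; lra.
      + apply is_derive_Rminus; [apply is_derive_add_arg | apply is_derive_sub_arg]; apply Hw2; lra.
    - unfold one; simpl. ring. }
  assert (Hchi : chi 0 < chi u).
  { apply increasing_by_derivative with (df := fun s => s * (w3 (D + s) - w3 (D - s))).
    - lra.
    - intros; apply Hder; lra.
    - intros x Hx. eapply is_derive_continuity_pt. apply Hder; lra.
    - intros x Hx. apply Rmult_lt_0_compat; [lra|].
      assert (w3 (D - x) < w3 (D + x)) by (apply Hw3_incr; lra). lra. }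
  unfold chi in Hchi. rewrite Rplus_0_r, Rminus_0_r in Hchi. lra.
Qed.

Lemma odd_quotient_increasing D a b : 0 < a -> a < b -> b < D ->
  (w1 (D + a) - w1 (D - a)) / a < (w1 (D + b) - w1 (D - b)) / b.
Proof.
  intros Ha Hab HbD.
  set (K := fun s => (w1 (D + s) - w1 (D - s)) * / s).
  set (dK := fun s => (s * (w2 (D + s) + w2 (D - s)) - (w1 (D + s) - w1 (D - s))) / s ^ 2).
  assert (Hder : forall s, 0 < s < D -> is_derive K s (dK s)).
  { intros s Hs. unfold K, dK. eapply is_derive_val.
    - apply is_derive_Rmult; [| apply is_derive_inv; [apply is_derive_id | simpl; lra]].
      apply is_derive_Rminus; [apply is_derive_add_arg | apply is_derive_sub_arg]; apply Hw2; lra.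
    - unfold one; simpl. field. lra. }
  assert (HK : K a < K b).
  { apply increasing_by_derivative with (df := dK).
    - lra.
    - intros; apply Hder; lra.
    - intros x Hx. eapply is_derive_continuity_pt. apply Hder; lra.
    - intros x Hx. apply Rdiv_lt_0_compat; [apply odd_correction_pos; lra | apply pow_lt; lra]. }
  exact HK.
Qed.

Lemma pair_profile_derivative D rho p : 0 <= rho < p -> p ^ 2 < 2 * rho ^ 2 -> p < D ->
  let q := sqrt (2 * rho ^ 2 - p ^ 2) in
  is_derive (pair_profile w D rho) p
    ((w1 (D + p) - w1 (D - p)) - p / q * (w1 (D + q) - w1 (D - q))).
Proof.
  intros Hrp Hp2 HpD q.
  assert (HQ : 0 < 2 * rho ^ 2 - p ^ 2) by nra.
  assert (Hq : 0 < q) by (apply sqrt_lt_R0; auto).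
  assert (Hqp : q < p).
  { apply Rlt_le_trans with (sqrt (p ^ 2)); [apply sqrt_lt_1; nra | rewrite sqrt_pow2; lra]. }
  assert (Hsq : is_derive (fun p => sqrt (2 * rho ^ 2 - p ^ 2)) p (- p / q)).
  { eapply is_derive_val; [apply is_derive_sqrt; [auto_derive; auto | auto]|].
    simpl. replace (2 * (rho * (rho * 1)) - p * (p * 1)) with (2 * rho ^ 2 - p ^ 2) by ring.
    fold q. field. lra. }
  unfold pair_profile, even_part. eapply is_derive_val.
  - apply is_derive_Rplus; apply is_derive_Rplus.
    + apply is_derive_sub_arg, Hw1; lra.
    + apply is_derive_add_arg, Hw1; lra.
    + apply (is_derive_comp (fun q => w (D - q)) (fun p => sqrt (2 * rho ^ 2 - p ^ 2)));
        [apply is_derive_sub_arg, Hw1; fold q; lra | exact Hsq].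
    + apply (is_derive_comp (fun q => w (D + q)) (fun p => sqrt (2 * rho ^ 2 - p ^ 2)));
        [apply is_derive_add_arg, Hw1; fold q; lra | exact Hsq].
  - fold q. unfold scal; simpl. unfold mult; simpl. field. lra.
Qed.

Lemma pair_profile_continuous D rho p : 0 <= rho <= p -> p ^ 2 <= 2 * rho ^ 2 ->
  admissible_gap w (D - p) -> continuity_pt (pair_profile w D rho) p.
Proof.
  intros Hrp Hp2 Hgap.
  assert (Hw : forall d, 0 < d -> continuity_pt w d)
    by (intros d Hd; eapply is_derive_continuity_pt; apply Hw1; auto).
  assert (Hw_ge : forall d, D - p <= d -> continuity_pt w d).
  { intros d Hd. destruct Hgap as [Hg | [Hg Hc]]; [apply Hw; lra|].
    destruct (Req_dec d 0) as [->|]; [auto | apply Hw; lra]. }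
  set (q := fun p => sqrt (2 * rho ^ 2 - p ^ 2)).
  assert (Hq0 : 0 <= q p) by apply sqrt_pos.
  assert (Hqr : q p <= p).
  { apply Rle_trans with (sqrt (p ^ 2)); [apply sqrt_le_1_alt; nra | rewrite sqrt_pow2; lra]. }
  assert (Hq : continuity_pt q p).
  { apply (continuity_pt_comp (fun p => 2 * rho ^ 2 - p ^ 2) sqrt).
    - apply derivable_continuous_pt, derivable_pt_minus;
        [apply derivable_pt_const | apply derivable_pt_pow].
    - apply continuity_pt_sqrt; nra. }
  assert (Hid : continuity_pt (fun p : R => p) p) by apply derivable_continuous_pt, derivable_pt_id.
  assert (Hcst : continuity_pt (fun _ : R => D) p) by (apply continuity_pt_const; intros ? ?; auto).
  unfold pair_profile, even_part; fold (q p).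
  repeat apply continuity_pt_plus.
  - apply (continuity_pt_comp (fun p => D - p) w);
      [apply continuity_pt_minus; auto | apply Hw_ge; lra].
  - apply (continuity_pt_comp (fun p => D + p) w);
      [apply continuity_pt_plus; auto | apply Hw_ge; lra].
  - apply (continuity_pt_comp (fun p => D - q p) w);
      [apply continuity_pt_minus; auto | apply Hw_ge; lra].
  - apply (continuity_pt_comp (fun p => D + q p) w);
      [apply continuity_pt_plus; auto | apply Hw_ge; lra].
Qed.

(* The profile increases in p on [rho, sqrt 2 rho]: its derivative
   (w1(D+p) - w1(D-p)) - (p/q)(w1(D+q) - w1(D-q)) is positive because q < p and the odd
   difference quotient increases. *)
Lemma pair_profile_increasing D rho p1 p2 : 0 <= rho <= p1 -> p1 < p2 ->
  p2 ^ 2 <= 2 * rho ^ 2 -> admissible_gap w (D - p2) ->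
  pair_profile w D rho p1 < pair_profile w D rho p2.
Proof.
  intros Hr Hp12 Hp2 Hgap.
  assert (HpD : p2 <= D) by (destruct Hgap as [|[]]; lra).
  apply increasing_by_derivative with (df := fun p => let q := sqrt (2 * rho ^ 2 - p ^ 2) in
     (w1 (D + p) - w1 (D - p)) - p / q * (w1 (D + q) - w1 (D - q))); auto.
  - intros p Hp. apply pair_profile_derivative; nra.
  - intros p Hp. apply pair_profile_continuous; [lra | nra |].
    apply admissible_gap_mono with (D - p2); [lra | auto].
  - intros p Hp. cbv zeta.
    assert (HQ : 0 < 2 * rho ^ 2 - p ^ 2) by nra.
    set (q := sqrt (2 * rho ^ 2 - p ^ 2)).
    assert (Hq : 0 < q) by (apply sqrt_lt_R0; auto).
    assert (Hqp : q < p).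
    { apply Rlt_le_trans with (sqrt (p ^ 2)); [apply sqrt_lt_1; nra | rewrite sqrt_pow2; lra]. }
    pose proof (odd_quotient_increasing D q p Hq Hqp ltac:(lra)) as HK.
    apply (Rmult_lt_compat_l p) in HK; [|lra].
    replace (p * ((w1 (D + p) - w1 (D - p)) / p)) with (w1 (D + p) - w1 (D - p)) in HK
      by (field; lra).
    replace (p * ((w1 (D + q) - w1 (D - q)) / q)) with (p / q * (w1 (D + q) - w1 (D - q))) in HK
      by (field; lra).
    lra.
Qed.

End IncreasingThirdDerivative.

Lemma even_part_abs f D u : even_part f D (Rabs u) = even_part f D u.
Proof.
  unfold even_part, Rabs. destruct (Rcase_abs u); auto.
  replace (D - - u) with (D + u) by ring. replace (D + - u) with (D - u) by ring. lra.
Qed.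

Lemma pair_weight_profile w x y t :
  pair_weight w x y t = pair_profile w t (sqrt (x ^ 2 + y ^ 2)) (Rabs x + Rabs y).
Proof.
  unfold pair_profile. rewrite pow2_sqrt by nra.
  replace (2 * (x ^ 2 + y ^ 2) - (Rabs x + Rabs y) ^ 2) with (Rsqr (Rabs x - Rabs y))
    by (unfold Rsqr; rewrite (sq_abs x), (sq_abs y); ring).
  rewrite sqrt_Rsqr_abs, even_part_abs.
  assert (E : pair_weight w x y t = even_part w t (x + y) + even_part w t (x - y)).
  { unfold pair_weight, even_part.
    replace (t - x - y) with (t - (x + y)) by ring. replace (t + x + y) with (t + (x + y)) by ring.
    replace (t - x + y) with (t - (x - y)) by ring. replace (t + x - y) with (t + (x - y)) by ring.
    lra. }
  rewrite E, <- (even_part_abs w t (x + y)), <- (even_part_abs w t (x - y)),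
    <- (even_part_abs w t (Rabs x + Rabs y)), <- (even_part_abs w t (Rabs x - Rabs y)).
  destruct (Rle_dec 0 x), (Rle_dec 0 y);
    [ rewrite (Rabs_pos_eq x), (Rabs_pos_eq y) by lra
    | rewrite (Rabs_pos_eq x), (Rabs_left1 y) by lra
    | rewrite (Rabs_left1 x), (Rabs_pos_eq y) by lra
    | rewrite (Rabs_left1 x), (Rabs_left1 y) by lra ];
    [| replace (x + - y) with (x - y) by ring; replace (x - - y) with (x + y) by ring
     | replace (- x + y) with (- (x - y)) by ring; replace (- x - y) with (- (x + y)) by ring
     | replace (- x + - y) with (- (x + y)) by ring; replace (- x - - y) with (- (x - y)) by ring];
    rewrite ?Rabs_Ropp; lra.
Qed.

Lemma pair_weight_lt w x y x' y' t : increasing_third_derivative w ->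
  x ^ 2 + y ^ 2 = x' ^ 2 + y' ^ 2 -> Rabs (x * y) < Rabs (x' * y') ->
  admissible_gap w (t - Rabs x' - Rabs y') ->
  pair_weight w x y t < pair_weight w x' y' t.
Proof.
  intros [w1 [w2 [w3 [H1 [H2 [H3 H4]]]]]] Hs Hxy Hgap.
  rewrite !pair_weight_profile, <- Hs. rewrite !Rabs_mult in Hxy.
  pose proof (Rabs_pos x); pose proof (Rabs_pos y).
  pose proof (Rabs_pos x'); pose proof (Rabs_pos y').
  assert (E1 : (Rabs x + Rabs y) ^ 2 = x ^ 2 + y ^ 2 + 2 * (Rabs x * Rabs y))
    by (rewrite (sq_abs x), (sq_abs y); ring).
  assert (E2 : (Rabs x' + Rabs y') ^ 2 = x' ^ 2 + y' ^ 2 + 2 * (Rabs x' * Rabs y'))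
    by (rewrite (sq_abs x'), (sq_abs y'); ring).
  assert (Hlt : Rabs x + Rabs y < Rabs x' + Rabs y').
  { destruct (Rlt_le_dec (Rabs x + Rabs y) (Rabs x' + Rabs y')) as [|Hle]; auto.
    assert ((Rabs x' + Rabs y') ^ 2 <= (Rabs x + Rabs y) ^ 2) by (apply pow_incr; lra). lra. }
  apply (pair_profile_increasing w w1 w2 w3); auto.
  - split; [apply sqrt_pos|].
    apply Rle_trans with (sqrt ((Rabs x + Rabs y) ^ 2)); [|rewrite sqrt_pow2; lra].
    apply sqrt_le_1_alt. rewrite E1. pose proof (Rmult_le_pos _ _ (Rabs_pos x) (Rabs_pos y)). lra.
  - rewrite pow2_sqrt by nra. rewrite Hs, E2, (sq_abs x'), (sq_abs y').
    pose proof (pow2_ge_0 (Rabs x' - Rabs y')). nra.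
  - apply admissible_gap_mono with (t - Rabs x' - Rabs y'); [lra | auto].
Qed.

Lemma sign_sum_exchange_lt w x y x' y' c l : increasing_third_derivative w ->
  x ^ 2 + y ^ 2 = x' ^ 2 + y' ^ 2 -> Rabs (x * y) < Rabs (x' * y') ->
  admissible_gap w (c - sumabs (x' :: y' :: l)) ->
  sign_sum w c (x :: y :: l) < sign_sum w c (x' :: y' :: l).
Proof.
  intros Hw Hs Hxy Hgap. rewrite !sign_sum_pair. apply sign_sum_lt; intros t Ht.
  apply pair_weight_lt; auto. simpl sumabs in Hgap.
  apply admissible_gap_mono with (c - (Rabs x' + (Rabs y' + sumabs l))); [lra | auto].
Qed.

(** Concentration: the minimum is attained on the coordinate axes. *)

Fixpoint nonzeros (l : list R) : nat :=
  match l with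
  | nil => 0%nat
  | x :: l' => ((if Req_EM_T x 0 then 0 else 1) + nonzeros l')%nat
  end.

Lemma sumsq_zero_nonzeros l : sumsq l = 0 -> nonzeros l = 0%nat.
Proof.
  induction l as [|x l IH]; simpl; intros H; auto.
  pose proof (sumsq_ge0 l). assert (x = 0) by nra.
  destruct (Req_EM_T x 0); [|lra]. rewrite IH; auto; nra.
Qed.

Lemma nonzeros_cons_gt1 x l : (1 < nonzeros (x :: l))%nat ->
  (1 < nonzeros l)%nat \/ (x <> 0 /\ 0 < sumsq l).
Proof.
  simpl. destruct (Req_EM_T x 0) as [Hx|Hx]; intros H; [left; lia|].
  destruct (Nat.lt_ge_cases 1 (nonzeros l)); [left; auto | right; split; auto].
  destruct (sumsq_ge0 l) as [|Hz]; auto. symmetry in Hz.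
  apply sumsq_zero_nonzeros in Hz. lia.
Qed.

Lemma sumabs_repeat0 m : sumabs (repeat 0 m) = 0.
Proof. induction m; simpl; auto. rewrite IHm, Rabs_R0; ring. Qed.

Lemma merge_pair w x y c l : increasing_third_derivative w ->
  admissible_gap w (c - sumabs (x :: y :: l)) ->
  sign_sum w c (sqrt (x ^ 2 + y ^ 2) :: 0 :: l) <= sign_sum w c (x :: y :: l) /\
  (x * y <> 0 -> sign_sum w c (sqrt (x ^ 2 + y ^ 2) :: 0 :: l) < sign_sum w c (x :: y :: l)).
Proof.
  intros Hw Hgap.
  assert (Hstrict : x * y <> 0 ->
    sign_sum w c (sqrt (x ^ 2 + y ^ 2) :: 0 :: l) < sign_sum w c (x :: y :: l)).
  { intros Hxy. apply sign_sum_exchange_lt; auto.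
    - rewrite pow2_sqrt; nra.
    - rewrite Rmult_0_r, Rabs_R0. apply Rabs_pos_lt; auto. }
  split; auto.
  destruct (Req_dec (x * y) 0) as [E|E]; [right | left; auto].
  destruct (Rmult_integral _ _ E) as [-> | ->].
  - replace (0 ^ 2 + y ^ 2) with (Rsqr y) by (unfold Rsqr; ring).
    rewrite sqrt_Rsqr_abs, sign_sum_abs. apply sign_sum_perm, perm_swap.
  - replace (x ^ 2 + 0 ^ 2) with (Rsqr x) by (unfold Rsqr; ring).
    rewrite sqrt_Rsqr_abs. apply sign_sum_abs.
Qed.

Lemma concentrate w : increasing_third_derivative w -> forall rest x c,
  admissible_gap w (c - sumabs (x :: rest)) ->
  sign_sum w c (sqrt (sumsq (x :: rest)) :: repeat 0 (length rest)) <= sign_sum w c (x :: rest) /\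
  ((1 < nonzeros (x :: rest))%nat ->
    sign_sum w c (sqrt (sumsq (x :: rest)) :: repeat 0 (length rest)) < sign_sum w c (x :: rest)).
Proof.
  intros Hw. induction rest as [|y rest IH]; intros x c Hgap.
  - replace (sumsq (x :: nil)) with (Rsqr x) by (unfold Rsqr; simpl; ring).
    rewrite sqrt_Rsqr_abs. simpl repeat. rewrite sign_sum_abs.
    split; [lra|]. simpl. destruct (Req_EM_T x 0); simpl; lia.
  - set (rho := sqrt (sumsq (y :: rest))).
    set (zs := repeat 0 (length rest)).
    assert (Hrho : rho <= sumabs (y :: rest)) by apply sqrt_sumsq_le_sumabs.
    assert (Hrho0 : 0 <= rho) by apply sqrt_pos.
    assert (Hgap_side : forall e, Rabs e <= Rabs x ->
      admissible_gap w (c + e - sumabs (y :: rest))).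
    { intros e He. apply admissible_gap_mono with (c - sumabs (x :: y :: rest)); auto.
      simpl sumabs. pose proof (Rle_abs (- e)). rewrite Rabs_Ropp in *. lra. }
    destruct (IH y (c - x)) as [Lm Sm].
    { replace (c - x) with (c + - x) by ring. apply Hgap_side. rewrite Rabs_Ropp; lra. }
    destruct (IH y (c + x)) as [Lp Sp]; [apply Hgap_side; lra|].
    fold rho zs in Lm, Sm, Lp, Sp.
    (* first concentrate the tail, then merge x with the tail's norm rho *)
    destruct (merge_pair w x rho c zs Hw) as [Mle Mlt].
    { apply admissible_gap_mono with (c - sumabs (x :: y :: rest)); auto.
      change (sumabs (x :: rho :: zs)) with (Rabs x + (Rabs rho + sumabs zs)).
      change (sumabs (x :: y :: rest)) with (Rabs x + sumabs (y :: rest)).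
      unfold zs. rewrite sumabs_repeat0, (Rabs_pos_eq rho) by auto. lra. }
    replace (sqrt (x ^ 2 + rho ^ 2)) with (sqrt (sumsq (x :: y :: rest))) in Mle, Mlt
      by (unfold rho; rewrite pow2_sqrt by apply sumsq_ge0; reflexivity).
    change (repeat 0 (length (y :: rest))) with (0 :: zs).
    change (sign_sum w c (x :: y :: rest))
      with (sign_sum w (c - x) (y :: rest) + sign_sum w (c + x) (y :: rest)).
    change (sign_sum w c (x :: rho :: zs))
      with (sign_sum w (c - x) (rho :: zs) + sign_sum w (c + x) (rho :: zs)) in Mle, Mlt.
    split; [lra|]. intros Hnz.
    destruct (nonzeros_cons_gt1 x (y :: rest) Hnz) as [Hlt | [Hx Hy]].
    + specialize (Sm Hlt); specialize (Sp Hlt); lra.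
    + assert (Hrho_pos : 0 < rho) by (apply sqrt_lt_R0; auto).
      assert (Hxr : x * rho <> 0) by (apply Rmult_integral_contrapositive; split; lra).
      specialize (Mlt Hxr). lra.
Qed.

(** Equalisation: the maximum is attained on the diagonals. *)

Lemma sumsq_lt_all l tau : l <> nil -> (forall x, In x l -> x ^ 2 < tau ^ 2) ->
  sumsq l < INR (length l) * tau ^ 2.
Proof.
  induction l as [|a l IH]; intros Hn H; [congruence|].
  cbn [length sumsq]. rewrite S_INR.
  assert (a ^ 2 < tau ^ 2) by (apply H; left; auto).
  destruct l as [|b l]; [simpl; lra|].
  assert (sumsq (b :: l) < INR (length (b :: l)) * tau ^ 2)
    by (apply IH; [congruence | intros; apply H; right; auto]).
  lra.
Qed.

Lemma sumsq_gt_all l tau : l <> nil -> (forall x, In x l -> tau ^ 2 < x ^ 2) ->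
  INR (length l) * tau ^ 2 < sumsq l.
Proof.
  induction l as [|a l IH]; intros Hn H; [congruence|].
  cbn [length sumsq]. rewrite S_INR.
  assert (tau ^ 2 < a ^ 2) by (apply H; left; auto).
  destruct l as [|b l]; [simpl; lra|].
  assert (INR (length (b :: l)) * tau ^ 2 < sumsq (b :: l))
    by (apply IH; [congruence | intros; apply H; right; auto]).
  lra.
Qed.

Lemma above_and_below l tau : l <> nil -> sumsq l = INR (length l) * tau ^ 2 ->
  (forall x, In x l -> x ^ 2 <> tau ^ 2) ->
  (exists x, In x l /\ tau ^ 2 < x ^ 2) /\ (exists y, In y l /\ y ^ 2 < tau ^ 2).
Proof.
  intros Hne Hs Hno. split; apply NNPP; intros HN.
  - assert (sumsq l < INR (length l) * tau ^ 2); [|lra].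
    apply sumsq_lt_all; auto. intros x Hx. specialize (Hno x Hx).
    destruct (Rtotal_order (x ^ 2) (tau ^ 2)) as [|[|]]; [auto | congruence | exfalso; eauto].
  - assert (INR (length l) * tau ^ 2 < sumsq l); [|lra].
    apply sumsq_gt_all; auto. intros x Hx. specialize (Hno x Hx).
    destruct (Rtotal_order (x ^ 2) (tau ^ 2)) as [|[|]]; [exfalso; eauto | congruence | auto].
Qed.

Lemma permutation_front (x : R) l : In x l -> exists l', Permutation l (x :: l').
Proof.
  intros Hin. destruct (in_split _ _ Hin) as [l1 [l2 ->]].
  exists (l1 ++ l2). apply Permutation_sym, Permutation_middle.
Qed.

Lemma permutation_front2 (x y : R) l : In x l -> In y l -> x <> y ->
  exists l', Permutation l (x :: y :: l').
Proof.
  intros Hx Hy Hxy. destruct (permutation_front x l Hx) as [l1 Hp1].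
  assert (Hy1 : In y l1).
  { destruct (Permutation_in _ Hp1 Hy) as [E|]; [congruence | auto]. }
  destruct (permutation_front y l1 Hy1) as [l2 Hp2].
  exists l2. eapply perm_trans; [exact Hp1 | apply perm_skip, Hp2].
Qed.

Lemma sumabs_le_mean l tau : 0 <= tau -> sumsq l = INR (length l) * tau ^ 2 ->
  sumabs l <= INR (length l) * tau.
Proof.
  intros Ht Hs. pose proof (cauchy_schwarz_list l) as C. rewrite Hs in C.
  pose proof (sumabs_ge0 l). pose proof (pos_INR (length l)).
  apply Rle_trans with (sqrt (sumabs l ^ 2)); [rewrite sqrt_pow2; lra|].
  rewrite <- (sqrt_pow2 (INR (length l) * tau)) by nra. apply sqrt_le_1_alt. nra.
Qed.

Lemma exchange_towards_mean w tau x y c l : increasing_third_derivative w -> 0 <= tau ->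
  y ^ 2 < tau ^ 2 < x ^ 2 ->
  let s := sqrt (x ^ 2 + y ^ 2 - tau ^ 2) in
  admissible_gap w (c - sumabs (tau :: s :: l)) ->
  sign_sum w c (x :: y :: l) < sign_sum w c (tau :: s :: l).
Proof.
  intros Hw Ht Hxy s Hgap.
  assert (Hs2 : s ^ 2 = x ^ 2 + y ^ 2 - tau ^ 2) by (apply pow2_sqrt; nra).
  apply sign_sum_exchange_lt; auto; [lra|].
  assert (Hsq : (x * y) ^ 2 < (tau * s) ^ 2).
  { rewrite !Rpow_mult_distr, Hs2.
    assert (0 < (x ^ 2 - tau ^ 2) * (tau ^ 2 - y ^ 2)) by (apply Rmult_lt_0_compat; lra). nra. }
  rewrite (sq_abs (x * y)), (sq_abs (tau * s)) in Hsq.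
  pose proof (Rabs_pos (x * y)). pose proof (Rabs_pos (tau * s)).
  destruct (Rlt_le_dec (Rabs (x * y)) (Rabs (tau * s))) as [|Hle]; auto.
  assert (Rabs (tau * s) ^ 2 <= Rabs (x * y) ^ 2) by (apply pow_incr; lra). lra.
Qed.

Definition all_abs_eq (tau : R) (l : list R) : Prop := List.Forall (fun x => Rabs x = tau) l.

Lemma equalize_step w c tau m l : increasing_third_derivative w -> 0 <= tau ->
  length l = S m -> sumsq l = INR (S m) * tau ^ 2 -> admissible_gap w (c - INR (S m) * tau) ->
  exists l', length l' = m /\ sumsq l' = INR m * tau ^ 2 /\
    ((sign_sum w c l = sign_sum w c (tau :: l') /\ (~ all_abs_eq tau l -> ~ all_abs_eq tau l')) \/
     sign_sum w c l < sign_sum w c (tau :: l')).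
Proof.
  intros Hw Ht Hl Hs Hgap. rewrite S_INR in Hs, Hgap.
  destruct (classic (exists x, In x l /\ Rabs x = tau)) as [[x [Hin Hx]] | Hno].
  - (* a coordinate of modulus tau is moved to the front *)
    destruct (permutation_front x l Hin) as [l' Hp].
    assert (Hx2 : x ^ 2 = tau ^ 2) by (rewrite sq_abs, Hx; auto).
    exists l'. split; [apply Permutation_length in Hp; simpl in Hp; lia|].
    split; [rewrite (sumsq_perm _ _ Hp) in Hs; simpl in Hs; lra|]. left. split.
    + rewrite (sign_sum_perm _ _ _ _ Hp), <- sign_sum_abs, Hx. reflexivity.
    + intros Hf HF. apply Hf, (Permutation_Forall (Permutation_sym Hp)). constructor; auto.
  - (* otherwise a coordinate above and one below tau are exchanged *)
    assert (Hno' : forall x, In x l -> x ^ 2 <> tau ^ 2).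
    { intros x Hx E. apply Hno. exists x; split; auto.
      rewrite <- (Rabs_pos_eq tau) by auto. apply Rsqr_eq_abs_0. unfold Rsqr; nra. }
    destruct (above_and_below l tau) as [[x [Hx Hx2]] [y [Hy Hy2]]];
      [intros ->; discriminate | rewrite Hl, S_INR; auto | auto |].
    destruct (permutation_front2 x y l Hx Hy) as [l2 Hp]; [intros ->; lra|].
    set (s := sqrt (x ^ 2 + y ^ 2 - tau ^ 2)).
    assert (Hs2 : s ^ 2 = x ^ 2 + y ^ 2 - tau ^ 2) by (apply pow2_sqrt; nra).
    assert (Hl' : length (s :: l2) = m) by (apply Permutation_length in Hp; simpl in *; lia).
    assert (Hs' : sumsq (s :: l2) = INR m * tau ^ 2).
    { rewrite (sumsq_perm _ _ Hp) in Hs. cbn [sumsq] in Hs |- *. nra. }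
    assert (Hcs : sumabs (tau :: s :: l2) <= (INR m + 1) * tau).
    { replace ((INR m + 1) * tau) with (INR (length (tau :: s :: l2)) * tau)
        by (change (length (tau :: s :: l2)) with (S (length (s :: l2))); rewrite S_INR, Hl'; ring).
      apply sumabs_le_mean; auto.
      change (length (tau :: s :: l2)) with (S (length (s :: l2))). rewrite S_INR, Hl'.
      change (sumsq (tau :: s :: l2)) with (tau ^ 2 + sumsq (s :: l2)). rewrite Hs'. ring. }
    exists (s :: l2). split; [auto | split; [auto | right]].
    rewrite (sign_sum_perm _ _ _ _ Hp). apply (exchange_towards_mean w tau x y c l2 Hw Ht); [lra|].
    apply admissible_gap_mono with (c - (INR m + 1) * tau); auto. fold s; lra.
Qed.

Lemma equalize w : increasing_third_derivative w -> forall m l c tau, 0 <= tau ->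
  length l = m -> sumsq l = INR m * tau ^ 2 -> admissible_gap w (c - INR m * tau) ->
  sign_sum w c l <= sign_sum w c (repeat tau m) /\
  (~ all_abs_eq tau l -> sign_sum w c l < sign_sum w c (repeat tau m)).
Proof.
  intros Hw; induction m as [|m IH]; intros l c tau Ht Hl Hs Hgap.
  - destruct l; [|discriminate]. split; [simpl; lra|].
    intros Hf; exfalso; apply Hf; constructor.
  - destruct (equalize_step w c tau m l Hw Ht Hl Hs Hgap) as [l' [Hl' [Hs' Hcmp]]].
    rewrite S_INR in Hgap.
    destruct (IH l' (c - tau) tau Ht Hl' Hs') as [Lm Sm];
      [apply admissible_gap_mono with (c - (INR m + 1) * tau); auto; lra|].
    destruct (IH l' (c + tau) tau Ht Hl' Hs') as [Lp Sp];
      [apply admissible_gap_mono with (c - (INR m + 1) * tau); auto; pose proof (pos_INR m); nra|].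
    change (sign_sum w c (tau :: l'))
      with (sign_sum w (c - tau) l' + sign_sum w (c + tau) l') in Hcmp.
    change (sign_sum w c (repeat tau (S m)))
      with (sign_sum w (c - tau) (repeat tau m) + sign_sum w (c + tau) (repeat tau m)).
    destruct Hcmp as [[Heq Hnot] | Hlt]; split; try lra.
    intros Hf. specialize (Sm (Hnot Hf)); specialize (Sp (Hnot Hf)). lra.
Qed.

(** H_n as a sign sum. *)

(* the coordinates M_(n-1), ..., M_0 of a point of R^n *)
Fixpoint coords (M : nat -> R) (n : nat) : list R :=
  match n with O => nil | S k => M k :: coords M k end.

Lemma coords_length M n : length (coords M n) = n.
Proof. induction n; simpl; auto. Qed.

Lemma coords_sumsq M n : sumsq (coords M n) = rsum n (fun j => M j ^ 2).
Proof. induction n; simpl; auto. simpl in IHn. rewrite IHn; ring. Qed.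

Lemma coords_sumabs M n : sumabs (coords M n) = rsum n (fun j => Rabs (M j)).
Proof. induction n; simpl; auto. rewrite IHn; ring. Qed.

Definition vsign (i j : nat) : R := if Nat.testbit i j then 1 else -1.

Lemma vert_vsign i j : vert i j = vsign i j / 2.
Proof. unfold vert, vsign. destruct (Nat.testbit i j); field. Qed.

Lemma vsign_le_abs i j x : vsign i j * x <= Rabs x.
Proof.
  unfold vsign. destruct (Nat.testbit i j); [rewrite Rmult_1_l; apply Rle_abs|].
  pose proof (Rle_abs (- x)). rewrite Rabs_Ropp in *. lra.
Qed.

(* The vertices 2^n + i (i < 2^n) are the vertices i with coordinate n flipped to +. *)
Lemma testbit_low i n : (i < 2 ^ n)%nat -> Nat.testbit i n = false.
Proof. intros H. rewrite Nat.testbit_eqb, Nat.div_small by auto. reflexivity. Qed.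

Lemma testbit_high i n : (i < 2 ^ n)%nat -> Nat.testbit (2 ^ n + i) n = true.
Proof.
  intros H. rewrite Nat.testbit_eqb.
  replace (2 ^ n + i)%nat with (1 * 2 ^ n + i)%nat by lia.
  rewrite Nat.div_add_l by (apply Nat.pow_nonzero; lia). rewrite Nat.div_small by auto.
  reflexivity.
Qed.

Lemma testbit_high_below i n j : (i < 2 ^ n)%nat -> (j < n)%nat ->
  Nat.testbit (2 ^ n + i) j = Nat.testbit i j.
Proof.
  intros H Hj. rewrite <- (Nat.mod_pow2_bits_low _ n j Hj).
  replace (2 ^ n + i)%nat with (i + 1 * 2 ^ n)%nat by lia.
  rewrite Nat.Div0.mod_add, Nat.mod_small by auto. reflexivity.
Qed.

Lemma rsum_vertices_sign_sum n M : forall g c,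
  rsum (2 ^ n) (fun i => g (c - rsum n (fun j => vsign i j * M j))) = sign_sum g c (coords M n).
Proof.
  induction n as [|n IH]; intros g c; [simpl; rewrite Rplus_0_l, Rminus_0_r; reflexivity|].
  rewrite Nat.pow_succ_r'. replace (2 * 2 ^ n)%nat with (2 ^ n + 2 ^ n)%nat by lia.
  rewrite rsum_add_range.
  change (sign_sum g c (coords M (S n)))
    with (sign_sum g (c - M n) (coords M n) + sign_sum g (c + M n) (coords M n)).
  rewrite <- !IH, (Rplus_comm (rsum (2 ^ n) _)).
  f_equal; apply rsum_ext; intros i Hi; f_equal; simpl rsum.
  - unfold vsign at 2. rewrite testbit_high by auto.
    rewrite (rsum_ext n _ (fun j => vsign i j * M j)); [ring|].
    intros j Hj. unfold vsign. rewrite testbit_high_below by auto. auto.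
  - unfold vsign at 2. rewrite testbit_low by auto. ring.
Qed.

Lemma dist2_vert n M i :
  dist2 n M (vert i) = rsum n (fun j => M j ^ 2) + INR n / 4 - rsum n (fun j => vsign i j * M j).
Proof.
  unfold dist2. rewrite (rsum_ext n _ (fun j => (M j ^ 2 + / 4) - vsign i j * M j)).
  - rewrite rsum_minus, rsum_plus, rsum_const. lra.
  - intros j _. rewrite vert_vsign. unfold vsign. destruct (Nat.testbit i j); field.
Qed.

Definition centre (n : nat) (r h : R) : R := r ^ 2 + INR n / 4 + h.

Lemma Hn_sign_sum n r h lam M : on_sphere n r M ->
  Hn n h lam M = sign_sum (fun t => rpow t (lam / 2)) (centre n r h) (coords M n).
Proof.
  intros Hs. unfold Hn, centre. rewrite <- rsum_vertices_sign_sum.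
  apply rsum_ext. intros i _. f_equal. rewrite dist2_vert. unfold on_sphere in Hs. rewrite Hs. ring.
Qed.

Lemma sphere_sumabs n r M : 0 < r -> on_sphere n r M -> sumabs (coords M n) <= r * sqrt (INR n).
Proof.
  intros Hr Hs. pose proof (cauchy_schwarz_list (coords M n)) as C.
  rewrite coords_length, coords_sumsq, Hs in C.
  pose proof (sumabs_ge0 (coords M n)). pose proof (sqrt_pos (INR n)).
  apply Rle_trans with (sqrt (sumabs (coords M n) ^ 2)); [rewrite sqrt_pow2; lra|].
  rewrite <- (sqrt_pow2 (r * sqrt (INR n))) by nra. apply sqrt_le_1_alt.
  rewrite Rpow_mult_distr, pow2_sqrt by apply pos_INR. lra.
Qed.

(* the smallest possible squared distance to a vertex, plus h: zero exactly in the
   degenerate case h = 0, r = sqrt n / 2 *)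
Lemma centre_minus_max n r h :
  centre n r h - r * sqrt (INR n) = (r - sqrt (INR n) / 2) ^ 2 + h.
Proof. unfold centre. pose proof (pow2_sqrt (INR n) (pos_INR n)). nra. Qed.

Lemma centre_gap_nonneg n r h : 0 <= h -> 0 <= centre n r h - r * sqrt (INR n).
Proof. intros Hh. rewrite centre_minus_max. pose proof (pow2_ge_0 (r - sqrt (INR n) / 2)). lra. Qed.

Lemma all_dist_pos_iff n r h M : on_sphere n r M ->
  (forall i, (i < 2 ^ n)%nat -> 0 < dist2 n M (vert i) + h) <->
  0 < centre n r h - sumabs (coords M n).
Proof.
  intros Hs. unfold on_sphere in Hs. split.
  - intros H.
    set (g := fun t => if Rlt_dec 0 t then 0 else 1).
    assert (Hg : forall t, 0 <= g t) by (intros; unfold g; destruct Rlt_dec; lra).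
    pose proof (sign_sum_ge_min g (centre n r h) (coords M n) Hg) as Hmin.
    unfold centre in Hmin. rewrite <- Hs, <- rsum_vertices_sign_sum in Hmin.
    rewrite (rsum_ext (2 ^ n) _ (fun _ => 0)), rsum_const, Rmult_0_r in Hmin.
    + unfold g in Hmin. unfold centre. rewrite <- Hs.
      destruct Rlt_dec; [auto | lra].
    + intros i Hi. specialize (H i Hi). rewrite dist2_vert in H.
      unfold g. destruct Rlt_dec; [auto | lra].
  - intros H i Hi. rewrite dist2_vert, Hs. rewrite coords_sumabs in H. unfold centre in H.
    pose proof (rsum_le n _ _ (fun j _ => vsign_le_abs i j (M j))). lra.
Qed.

Lemma Hdom_iff n r h lam M : Hdom n r h lam M <->
  on_sphere n r M /\ (0 <= lam \/ 0 < centre n r h - sumabs (coords M n)).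
Proof.
  unfold Hdom. split; intros [Hs H]; split; auto; destruct H as [H|H]; auto; right;
    [apply (all_dist_pos_iff n r h M Hs) | apply (all_dist_pos_iff n r h M Hs)]; auto.
Qed.

Lemma rpow_pos_eq t k : 0 < t -> rpow t k = Rpower t k.
Proof. intros H; unfold rpow; destruct (Rlt_dec 0 t); [auto | lra]. Qed.

Lemma rpow_nonneg t k : 0 <= rpow t k.
Proof.
  unfold rpow. destruct (Rlt_dec 0 t); [unfold Rpower; left; apply exp_pos|].
  destruct (Rlt_dec 0 k); lra.
Qed.

Lemma rpow_INR t m : 0 <= t -> (0 < m)%nat -> rpow t (INR m) = t ^ m.
Proof.
  intros Ht Hm. destruct (Rlt_dec 0 t) as [Hp|Hp].
  - rewrite rpow_pos_eq by auto. apply Rpower_pow; auto.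
  - assert (t = 0) by lra. subst. unfold rpow.
    destruct (Rlt_dec 0 0); [lra|]. destruct (Rlt_dec 0 (INR m)) as [|Hn].
    + destruct m; [lia|]. simpl; ring.
    + exfalso; apply Hn, lt_0_INR; auto.
Qed.

Lemma rpow_continuous_at_0 k : 0 < k -> continuity_pt (fun t => rpow t k) 0.
Proof.
  intros Hk eps Heps. exists (Rpower eps (/ k)). split; [unfold Rpower; apply exp_pos|].
  intros x [_ Hx]. simpl in *. unfold R_dist in *. rewrite Rminus_0_r in Hx.
  assert (H0 : rpow 0 k = 0)
    by (unfold rpow; destruct (Rlt_dec 0 0); [lra|]; destruct (Rlt_dec 0 k); lra).
  rewrite H0, Rminus_0_r.
  destruct (Rlt_dec 0 x) as [Hxp|Hxn].
  - rewrite rpow_pos_eq, Rabs_pos_eq by (auto; unfold Rpower; left; apply exp_pos).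
    rewrite Rabs_pos_eq in Hx by lra.
    replace eps with (Rpower (Rpower eps (/ k)) k)
      by (rewrite Rpower_mult, Rinv_l, Rpower_1; lra).
    apply Rlt_Rpower_l; lra.
  - unfold rpow. destruct (Rlt_dec 0 x); [lra|]. destruct (Rlt_dec 0 k); [|lra].
    rewrite Rabs_R0; auto.
Qed.

Definition power_weight (s k t : R) : R := s * rpow t k.

(* k (k-1) (k-2) (k-3): the fourth derivative of t^k is this number times t^(k-4) *)
Definition falling4 (k : R) : R := k * (k - 1) * (k - 2) * (k - 3).

Lemma is_derive_scaled_Rpower c e d :
  0 < d -> is_derive (fun t => c * Rpower t e) d (c * (e * Rpower d (e - 1))).
Proof. intros H. apply is_derive_scal, is_derive_Reals, derivable_pt_lim_power; auto. Qed.

Lemma power_weight_increasing_third_derivative s k :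
  0 < s * falling4 k -> increasing_third_derivative (power_weight s k).
Proof.
  unfold falling4, power_weight. intros Hs.
  exists (fun d => s * k * Rpower d (k - 1)), (fun d => s * k * (k - 1) * Rpower d (k - 2)),
         (fun d => s * k * (k - 1) * (k - 2) * Rpower d (k - 3)).
  split; [|split; [|split]].
  - intros d Hd. apply is_derive_ext_loc with (fun t => s * Rpower t k).
    + exists (mkposreal d Hd). intros y Hy. unfold ball in Hy; simpl in Hy.
      unfold AbsRing_ball, abs, minus, plus, opp in Hy; simpl in Hy.
      apply Rabs_def2 in Hy. rewrite rpow_pos_eq; [auto | lra].
    + eapply is_derive_val; [apply is_derive_scaled_Rpower; auto | ring].
  - intros d Hd. eapply is_derive_val; [apply is_derive_scaled_Rpower; auto|].
    replace (k - 1 - 1) with (k - 2) by ring. ring.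
  - intros d Hd. eapply is_derive_val; [apply is_derive_scaled_Rpower; auto|].
    replace (k - 2 - 1) with (k - 3) by ring. ring.
  - intros a b Ha Hab. unfold Rpower.
    set (C := s * k * (k - 1) * (k - 2)).
    assert (HC : 0 < C * (k - 3)) by (unfold C; nra).
    pose proof (ln_increasing a b Ha Hab) as Hln.
    destruct (Rlt_le_dec 0 (k - 3)) as [Hk|Hk].
    + assert (0 < C) by nra.
      apply Rmult_lt_compat_l; auto. apply exp_increasing. nra.
    + assert (Hk' : k - 3 < 0) by (destruct Hk as [|Heq]; [auto | rewrite Heq in HC; lra]).
      assert (C < 0) by nra.
      assert (exp ((k - 3) * ln b) < exp ((k - 3) * ln a)) by (apply exp_increasing; nra).
      nra.
Qed.

Lemma power_weight_continuous_at_0 s k : 0 < k -> continuity_pt (power_weight s k) 0.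
Proof.
  intros Hk. unfold power_weight. apply (continuity_pt_mult (fct_cte s) (fun t => rpow t k)).
  - apply continuity_pt_const. intros ? ?; reflexivity.
  - apply rpow_continuous_at_0; auto.
Qed.

Lemma falling4_pos lam : lam < 0 \/ 2 < lam < 4 \/ 6 < lam -> 0 < falling4 (lam / 2).
Proof.
  unfold falling4. set (k := lam / 2). intros H.
  replace (k * (k - 1) * (k - 2) * (k - 3)) with ((k * (k - 1)) * ((k - 2) * (k - 3))) by ring.
  apply Rmult_lt_0_compat; unfold k; nra.
Qed.

Lemma falling4_neg lam : 0 < lam < 2 \/ 4 < lam < 6 -> falling4 (lam / 2) < 0.
Proof.
  unfold falling4. set (k := lam / 2). intros H.
  replace (k * (k - 1) * (k - 2) * (k - 3)) with ((k * (k - 1)) * ((k - 2) * (k - 3))) by ring.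
  destruct H as [H|H].
  - assert (k * (k - 1) < 0) by (unfold k; nra). assert (0 < (k - 2) * (k - 3)) by (unfold k; nra).
    nra.
  - assert (0 < k * (k - 1)) by (unfold k; nra). assert ((k - 2) * (k - 3) < 0) by (unfold k; nra).
    nra.
Qed.

Definition axis_point (r : R) (j : nat) : R := if Nat.eqb j 0 then r else 0.

Lemma axis_point_in_E n r : (1 <= n)%nat -> in_E n r (axis_point r).
Proof.
  intros Hn. exists 0%nat. split; [lia|]. exists 1. split; [left; auto|].
  intros j Hj. unfold axis_point. destruct (Nat.eqb j 0); ring.
Qed.

Lemma coords_single n M i : (i < n)%nat -> (forall j, (j < n)%nat -> j <> i -> M j = 0) ->
  Permutation (coords M n) (M i :: repeat 0 (n - 1)).
Proof.
  induction n as [|n IH]; intros Hi H; [lia|]. simpl coords.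
  destruct (Nat.eq_dec i n) as [->|Hne].
  - replace (S n - 1)%nat with n by lia. apply perm_skip.
    clear IH Hi. induction n as [|n IHn]; simpl; auto.
    rewrite H by lia. apply perm_skip, IHn. intros j Hj Hjn. apply H; lia.
  - rewrite (H n) by lia. replace (S n - 1)%nat with (S (n - 1)) by lia.
    eapply perm_trans; [apply perm_skip, IH; [lia | intros; apply H; lia] | apply perm_swap].
Qed.

Lemma in_E_props n r M : 0 < r -> in_E n r M ->
  on_sphere n r M /\ sumabs (coords M n) = r /\
  (forall w c, sign_sum w c (coords M n) = sign_sum w c (r :: repeat 0 (n - 1))).
Proof.
  intros Hr [i [Hi [s [Hs HM]]]].
  assert (Hs2 : s ^ 2 = 1) by (destruct Hs; subst; ring).
  assert (Hsa : Rabs s = 1) by (destruct Hs; subst; unfold Rabs; destruct Rcase_abs; lra).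
  assert (HMi : M i = s * r) by (rewrite HM, Nat.eqb_refl; auto).
  split; [|split].
  - unfold on_sphere. rewrite (rsum_ext n _ (fun j => if Nat.eqb j i then (s * r) ^ 2 else 0)).
    + rewrite rsum_single by auto. rewrite Rpow_mult_distr, Hs2; ring.
    + intros j Hj. rewrite HM by auto. destruct (Nat.eqb j i); ring.
  - rewrite coords_sumabs, (rsum_ext n _ (fun j => if Nat.eqb j i then Rabs (s * r) else 0)).
    + rewrite rsum_single, Rabs_mult, Hsa, Rabs_pos_eq by (auto; lra). ring.
    + intros j Hj. rewrite HM by auto. destruct (Nat.eqb j i); auto. apply Rabs_R0.
  - intros w c. rewrite (sign_sum_perm w c _ _ (coords_single n M i Hi ltac:(intros j Hj Hne;
      rewrite HM by auto; destruct (Nat.eqb_spec j i); [lia | auto]))).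
    rewrite <- sign_sum_abs, HMi, Rabs_mult, Hsa, Rabs_pos_eq, Rmult_1_l by lra. reflexivity.
Qed.

Lemma nonzeros_coords_pos M n i : (i < n)%nat -> M i <> 0 -> (1 <= nonzeros (coords M n))%nat.
Proof.
  induction n as [|n IH]; intros Hi HM; [lia|]. simpl.
  destruct (Req_EM_T (M n) 0) as [E|E]; simpl; [|lia].
  destruct (Nat.eq_dec i n) as [->|]; [contradiction | apply IH; auto; lia].
Qed.

Lemma nonzeros_coords_two M n i j : (i < n)%nat -> (j < n)%nat -> i <> j ->
  M i <> 0 -> M j <> 0 -> (2 <= nonzeros (coords M n))%nat.
Proof.
  induction n as [|n IH]; intros Hi Hj Hij HMi HMj; [lia|]. simpl.
  destruct (Nat.eq_dec i n) as [->|Hin]; [|destruct (Nat.eq_dec j n) as [->|Hjn]].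
  - destruct (Req_EM_T (M n) 0); [contradiction|]. simpl.
    pose proof (nonzeros_coords_pos M n j ltac:(lia) HMj). lia.
  - destruct (Req_EM_T (M n) 0); [contradiction|]. simpl.
    pose proof (nonzeros_coords_pos M n i ltac:(lia) HMi). lia.
  - pose proof (IH ltac:(lia) ltac:(lia) Hij HMi HMj). destruct (Req_EM_T (M n) 0); simpl; lia.
Qed.

Lemma in_E_of_nonzeros n r M : 0 < r -> on_sphere n r M -> (nonzeros (coords M n) <= 1)%nat ->
  in_E n r M.
Proof.
  intros Hr Hs Hnz. unfold on_sphere in Hs.
  destruct (classic (exists i, (i < n)%nat /\ M i <> 0)) as [[i [Hi Mi]]|Hno].
  - assert (Hz : forall j, (j < n)%nat -> j <> i -> M j = 0).
    { intros j Hj Hne. destruct (Req_dec (M j) 0) as [|Mj]; auto.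
      pose proof (nonzeros_coords_two M n j i Hj Hi Hne Mj Mi). lia. }
    assert (HMi : M i ^ 2 = r ^ 2).
    { rewrite <- Hs, (rsum_ext n _ (fun j => if Nat.eqb j i then M i ^ 2 else 0)).
      - rewrite rsum_single; auto.
      - intros j Hj. destruct (Nat.eqb_spec j i); [subst; auto | rewrite Hz; auto; ring]. }
    exists i. split; auto. exists (M i / r). split.
    + assert (Hcase : M i = r \/ M i = - r) by nra.
      destruct Hcase as [E|E]; rewrite E; [left | right]; field; lra.
    + intros j Hj. destruct (Nat.eqb_spec j i); [subst; field; lra | apply Hz; auto].
  - exfalso. assert (rsum n (fun j => M j ^ 2) = 0); [|nra].
    rewrite (rsum_ext n _ (fun _ => 0)), rsum_const; [ring|].
    intros j Hj. destruct (Req_dec (M j) 0) as [E|E]; [rewrite E; ring | exfalso; eauto].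
Qed.

Definition diag_coord (n : nat) (r : R) : R := r / sqrt (INR n).

Lemma diag_coord_props n r : (1 <= n)%nat -> 0 < r ->
  0 < diag_coord n r /\ INR n * diag_coord n r = r * sqrt (INR n) /\
  INR n * diag_coord n r ^ 2 = r ^ 2.
Proof.
  intros Hn Hr. unfold diag_coord.
  assert (HnR : 0 < INR n) by (apply lt_0_INR; lia).
  pose proof (sqrt_lt_R0 _ HnR) as Hsq. pose proof (pow2_sqrt _ (pos_INR n)) as Hsq2.
  split; [apply Rdiv_lt_0_compat; auto|].
  split; rewrite <- Hsq2 at 1; field; lra.
Qed.

Lemma all_abs_eq_coords M n tau :
  all_abs_eq tau (coords M n) <-> (forall j, (j < n)%nat -> Rabs (M j) = tau).
Proof.
  unfold all_abs_eq. induction n as [|n IH]; simpl; rewrite ?Forall_cons_iff.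
  - split; [intros; lia | constructor].
  - rewrite IH. split.
    + intros [Hn H] j Hj. destruct (Nat.eq_dec j n) as [->|]; [auto | apply H; lia].
    + intros H. split; [apply H; lia | intros; apply H; lia].
Qed.

Lemma in_D_all_abs_eq n r M : (1 <= n)%nat -> 0 < r ->
  in_D n r M <-> all_abs_eq (diag_coord n r) (coords M n).
Proof.
  intros Hn Hr. destruct (diag_coord_props n r Hn Hr) as [Ht _].
  rewrite all_abs_eq_coords. unfold in_D. fold (diag_coord n r).
  split; intros H j Hj; specialize (H j Hj).
  - destruct H as [-> | ->]; [|rewrite Rabs_Ropp]; apply Rabs_pos_eq; lra.
  - unfold Rabs in H. destruct (Rcase_abs (M j)); [right | left]; lra.
Qed.

Lemma in_D_on_sphere n r M : (1 <= n)%nat -> 0 < r -> in_D n r M -> on_sphere n r M.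
Proof.
  intros Hn Hr HD. destruct (diag_coord_props n r Hn Hr) as [_ [_ Hsq]].
  unfold on_sphere. rewrite (rsum_ext n _ (fun _ => diag_coord n r ^ 2)), rsum_const; auto.
  intros j Hj. destruct (HD j Hj) as [E|E]; rewrite E; unfold diag_coord; ring.
Qed.

Lemma sign_sum_all_abs_eq w c tau l : all_abs_eq tau l ->
  sign_sum w c l = sign_sum w c (repeat tau (length l)).
Proof.
  intros HF; revert c; induction HF as [|x l Hx HF IH]; intros c; simpl; auto.
  rewrite <- Hx.
  change (sign_sum w (c - x) l + sign_sum w (c + x) l
    = sign_sum w c (Rabs x :: repeat (Rabs x) (length l))).
  rewrite sign_sum_abs. simpl. rewrite !IH, Hx. auto.
Qed.

Definition argmin {T : Type} (dom : T -> Prop) (V : T -> R) (M : T) : Prop :=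
  dom M /\ forall N, dom N -> V M <= V N.

Definition argmax {T : Type} (dom : T -> Prop) (V : T -> R) (M : T) : Prop :=
  dom M /\ forall N, dom N -> V N <= V M.

Lemma argmin_ext {T : Type} (dom : T -> Prop) (V V' : T -> R) M :
  (forall N, dom N -> V N = V' N) -> argmin dom V M <-> argmin dom V' M.
Proof.
  intros H. unfold argmin. split; intros [HM Hle]; split; auto; intros N HN;
    specialize (Hle N HN); rewrite ?H in * by auto; lra.
Qed.

Lemma argmax_ext {T : Type} (dom : T -> Prop) (V V' : T -> R) M :
  (forall N, dom N -> V N = V' N) -> argmax dom V M <-> argmax dom V' M.
Proof.
  intros H. unfold argmax. split; intros [HM Hle]; split; auto; intros N HN;
    specialize (Hle N HN); rewrite ?H in * by auto; lra.
Qed.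

Section SignSumExtremes.

Variables (n : nat) (r a : R) (w : R -> R) (dom : (nat -> R) -> Prop).
Hypothesis Hn : (1 <= n)%nat.
Hypothesis Hr : 0 < r.
Hypothesis Hw : increasing_third_derivative w.

(* If the domain lies in Gamma, contains E and keeps the arguments of w admissible, the
   sign sum is minimal exactly on E: concentration strictly decreases it off E. *)
Lemma argmin_sign_sum_E :
  (forall M, dom M -> on_sphere n r M /\ admissible_gap w (a - sumabs (coords M n))) ->
  (forall M, in_E n r M -> dom M) ->
  forall M, argmin dom (fun N => sign_sum w a (coords N n)) M <-> in_E n r M.
Proof.
  intros Hdom HE.
  assert (Hlow : forall N, dom N ->
    sign_sum w a (r :: repeat 0 (n - 1)) <= sign_sum w a (coords N n) /\
    ((1 < nonzeros (coords N n))%nat ->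
      sign_sum w a (r :: repeat 0 (n - 1)) < sign_sum w a (coords N n))).
  { intros N HN. destruct (Hdom N HN) as [Hs Hgap].
    destruct n as [|m]; [lia|].
    replace r with (sqrt (sumsq (coords N (S m))))
      by (rewrite coords_sumsq; unfold on_sphere in Hs; rewrite Hs; apply sqrt_pow2; lra).
    simpl coords in *.
    replace (S m - 1)%nat with (length (coords N m)) by (rewrite coords_length; lia).
    apply concentrate; auto. }
  assert (HEval : forall M, in_E n r M ->
    sign_sum w a (coords M n) = sign_sum w a (r :: repeat 0 (n - 1)))
    by (intros M HM; apply (in_E_props n r M Hr HM)).
  intros M; split.
  - intros [HM Hmin].
    pose proof (Hmin _ (HE _ (axis_point_in_E n r Hn))) as Hle.
    rewrite (HEval _ (axis_point_in_E n r Hn)) in Hle.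
    apply in_E_of_nonzeros; [auto | apply (Hdom M HM) |].
    destruct (Nat.lt_ge_cases 1 (nonzeros (coords M n))) as [Hlt|]; auto.
    apply (Hlow M HM) in Hlt. lra.
  - intros HME. split; auto. intros N HN. rewrite HEval by auto. apply (Hlow N HN).
Qed.

(* If the domain lies in Gamma, contains D, and the arguments stay admissible at the
   extreme l1 norm r sqrt n, the sign sum is maximal exactly on D: equalisation strictly
   increases it off D. *)
Lemma argmax_sign_sum_D :
  (forall M, dom M -> on_sphere n r M) ->
  (forall M, in_D n r M -> dom M) ->
  admissible_gap w (a - r * sqrt (INR n)) ->
  forall M, argmax dom (fun N => sign_sum w a (coords N n)) M <-> in_D n r M.
Proof.
  intros Hdom HD Hgap.
  destruct (diag_coord_props n r Hn Hr) as [Ht [Hnt Hnt2]].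
  set (tau := diag_coord n r) in *.
  assert (Hup : forall N, dom N ->
    sign_sum w a (coords N n) <= sign_sum w a (repeat tau n) /\
    (~ all_abs_eq tau (coords N n) -> sign_sum w a (coords N n) < sign_sum w a (repeat tau n))).
  { intros N HN. apply equalize; [auto | lra | apply coords_length | | rewrite Hnt; auto].
    rewrite coords_sumsq. pose proof (Hdom N HN) as Hs. unfold on_sphere in Hs. lra. }
  assert (HDval : forall M, in_D n r M -> sign_sum w a (coords M n) = sign_sum w a (repeat tau n)).
  { intros M HM. apply in_D_all_abs_eq in HM; auto.
    rewrite (sign_sum_all_abs_eq w a tau _ HM), coords_length. auto. }
  assert (Hdiag : in_D n r (fun _ => tau)) by (intros j _; left; auto).
  intros M; split.
  - intros [HM Hmax].
    pose proof (Hmax _ (HD _ Hdiag)) as Hle. rewrite (HDval _ Hdiag) in Hle.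
    apply in_D_all_abs_eq; auto. apply NNPP. intros Hf. apply (Hup M HM) in Hf. lra.
  - intros HMD. split; auto. intros N HN. rewrite (HDval M HMD). apply (Hup N HN).
Qed.

End SignSumExtremes.

Lemma INR_ge2 n : (2 <= n)%nat -> 2 <= INR n.
Proof. intros H. replace 2 with (INR 2) by (simpl; ring). apply le_INR; auto. Qed.

Lemma centre_gap_axis n r h : (2 <= n)%nat -> 0 <= h -> 0 < centre n r h - r.
Proof.
  intros Hn Hh. unfold centre. pose proof (INR_ge2 n Hn). pose proof (pow2_ge_0 (r - 1 / 2)). nra.
Qed.

Lemma centre_gap_diag n r h : 0 <= h -> ~ (h = 0 /\ r = sqrt (INR n) / 2) ->
  0 < centre n r h - r * sqrt (INR n).
Proof.
  intros Hh Hnd. rewrite centre_minus_max.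
  destruct (Req_dec h 0) as [->|]; [|pose proof (pow2_ge_0 (r - sqrt (INR n) / 2)); lra].
  assert (Hne : r - sqrt (INR n) / 2 <> 0) by (intros E; apply Hnd; split; [auto | lra]).
  pose proof (pow2_gt_0 _ Hne). lra.
Qed.

Lemma in_E_Hdom n r h lam M : (2 <= n)%nat -> 0 < r -> 0 <= h -> in_E n r M -> Hdom n r h lam M.
Proof.
  intros Hn Hr Hh HM. destruct (in_E_props n r M Hr HM) as [Hs [Habs _]].
  apply Hdom_iff. split; auto. right. rewrite Habs. apply centre_gap_axis; auto.
Qed.

Lemma scaled_Hn_sign_sum n r h lam s M : on_sphere n r M ->
  s * Hn n h lam M = sign_sum (power_weight s (lam / 2)) (centre n r h) (coords M n).
Proof. intros Hs. unfold power_weight. rewrite sign_sum_scal, (Hn_sign_sum n r); auto. Qed.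

Lemma argmin_scaled_Hn n r h lam s : (2 <= n)%nat -> 0 < r -> 0 <= h ->
  0 < s * falling4 (lam / 2) ->
  forall M, argmin (Hdom n r h lam) (fun N => s * Hn n h lam N) M <-> in_E n r M.
Proof.
  intros Hn Hr Hh Hs M.
  assert (Hlam : lam <> 0)
    by (intros ->; unfold falling4 in Hs; replace (0 / 2) with 0 in Hs by field; lra).
  rewrite (argmin_ext _ _
    (fun N => sign_sum (power_weight s (lam / 2)) (centre n r h) (coords N n)))
    by (intros N HN; apply scaled_Hn_sign_sum, (proj1 HN)).
  apply argmin_sign_sum_E; [lia | auto | apply power_weight_increasing_third_derivative; auto | |].
  - intros N HN. apply Hdom_iff in HN as [Hsph Hpos]. split; auto.
    destruct Hpos as [Hl | Hpos]; [right | left; auto]. split.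
    + pose proof (sphere_sumabs n r N Hr Hsph). pose proof (centre_gap_nonneg n r h Hh). lra.
    + apply power_weight_continuous_at_0. lra.
  - intros N HN. apply in_E_Hdom; auto.
Qed.

Lemma argmax_scaled_Hn n r h lam s : (2 <= n)%nat -> 0 < r -> 0 <= h ->
  0 < s * falling4 (lam / 2) -> (0 < lam \/ ~ (h = 0 /\ r = sqrt (INR n) / 2)) ->
  forall M, argmax (Hdom n r h lam) (fun N => s * Hn n h lam N) M <-> in_D n r M.
Proof.
  intros Hn Hr Hh Hs Hcase M.
  rewrite (argmax_ext _ _
    (fun N => sign_sum (power_weight s (lam / 2)) (centre n r h) (coords N n)))
    by (intros N HN; apply scaled_Hn_sign_sum, (proj1 HN)).
  apply argmax_sign_sum_D;
    [lia | auto | apply power_weight_increasing_third_derivative; auto | | |].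
  - intros N HN. apply (proj1 HN).
  - intros N HN. assert (Hsph : on_sphere n r N) by (apply in_D_on_sphere; auto; lia).
    apply Hdom_iff. split; auto.
    destruct Hcase as [Hl | Hnd]; [left; lra | right].
    pose proof (sphere_sumabs n r N Hr Hsph). pose proof (centre_gap_diag n r h Hh Hnd). lra.
  - destruct Hcase as [Hl | Hnd]; [right; split | left; apply centre_gap_diag; auto].
    + apply centre_gap_nonneg; auto.
    + apply power_weight_continuous_at_0; lra.
Qed.

Lemma is_min_at_scaled n r h lam M :
  (is_min_at n r h lam M <-> argmin (Hdom n r h lam) (fun N => 1 * Hn n h lam N) M) /\
  (is_min_at n r h lam M <-> argmax (Hdom n r h lam) (fun N => -1 * Hn n h lam N) M).
Proof.
  unfold is_min_at, argmin, argmax.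
  split; split; intros [HM H]; split; auto; intros N HN; specialize (H N HN); lra.
Qed.

Lemma is_max_at_scaled n r h lam M :
  (is_max_at n r h lam M <-> argmax (Hdom n r h lam) (fun N => 1 * Hn n h lam N) M) /\
  (is_max_at n r h lam M <-> argmin (Hdom n r h lam) (fun N => -1 * Hn n h lam N) M).
Proof.
  unfold is_max_at, argmin, argmax.
  split; split; intros [HM H]; split; auto; intros N HN; specialize (H N HN); lra.
Qed.

Lemma Hn_constant_of_weight n r h lam (P : R -> R) : 0 < r -> 0 <= h ->
  (forall t, 0 <= t -> rpow t (lam / 2) = P t) ->
  (forall c l l', length l = length l' -> sumsq l = sumsq l' -> sign_sum P c l = sign_sum P c l') ->
  forall M N, Hdom n r h lam M -> Hdom n r h lam N -> Hn n h lam M = Hn n h lam N.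
Proof.
  intros Hr Hh HP HS M N HM HN.
  apply Hdom_iff in HM as [HM _]. apply Hdom_iff in HN as [HN _].
  assert (Hpoly : forall K, on_sphere n r K ->
    Hn n h lam K = sign_sum P (centre n r h) (coords K n)).
  { intros K HK. rewrite (Hn_sign_sum n r h lam K HK). apply sign_sum_eq_on. intros t Ht. apply HP.
    pose proof (sphere_sumabs n r K Hr HK). pose proof (centre_gap_nonneg n r h Hh). lra. }
  rewrite !Hpoly by auto. apply HS; rewrite ?coords_length, ?coords_sumsq; auto.
  unfold on_sphere in *. rewrite HM, HN; auto.
Qed.

Lemma Hn_constant n r h lam : 0 < r -> 0 <= h -> (lam = 0 \/ lam = 2 \/ lam = 4 \/ lam = 6) ->
  forall M N, Hdom n r h lam M -> Hdom n r h lam N -> Hn n h lam M = Hn n h lam N.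
Proof.
  intros Hr Hh Hlam.
  destruct Hlam as [E|[E|[E|E]]]; subst lam.
  - apply (Hn_constant_of_weight n r h 0 (fun _ => 1)); auto.
    + intros t _. replace (0 / 2) with 0 by field. unfold rpow.
      destruct (Rlt_dec 0 t); [apply Rpower_O; auto | destruct (Rlt_dec 0 0); lra].
    + intros c l l' H1 H2. rewrite !sign_sum_deg0, H1; auto.
  - apply (Hn_constant_of_weight n r h 2 (fun t => t)); auto.
    + intros t Ht. replace (2 / 2) with (INR 1) by (simpl; field). rewrite rpow_INR; auto; ring.
    + intros c l l' H1 H2. rewrite !sign_sum_deg1, H1; auto.
  - apply (Hn_constant_of_weight n r h 4 (fun t => t ^ 2)); auto.
    + intros t Ht. replace (4 / 2) with (INR 2) by (simpl; field). rewrite rpow_INR; auto.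
    + intros c l l' H1 H2. rewrite !sign_sum_deg2, H1, H2; auto.
  - apply (Hn_constant_of_weight n r h 6 (fun t => t ^ 3)); auto.
    + intros t Ht. replace (6 / 2) with (INR 3) by (simpl; field). rewrite rpow_INR; auto.
    + intros c l l' H1 H2. rewrite !sign_sum_deg3, H1, H2; auto.
Qed.

Lemma falling4_half_zero lam : falling4 (lam / 2) = 0 -> lam = 0 \/ lam = 2 \/ lam = 4 \/ lam = 6.
Proof.
  unfold falling4. intros H.
  apply Rmult_integral in H as [H|H]; [apply Rmult_integral in H as [H|H];
    [apply Rmult_integral in H as [H|H] |] |];
    [left | right; left | right; right; left | right; right; right]; lra.
Qed.

Definition off_axis_point (r : R) (j : nat) : R :=
  if Nat.eqb j 0 then 3 * r / 5 else if Nat.eqb j 1 then 4 * r / 5 else 0.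

Lemma off_axis_point_props n r h lam : (2 <= n)%nat -> 0 < r -> 0 <= h ->
  Hdom n r h lam (off_axis_point r) /\ ~ in_E n r (off_axis_point r).
Proof.
  intros Hn Hr Hh. split.
  - apply Hdom_iff. split.
    + unfold on_sphere. rewrite rsum_split2 by auto.
      rewrite (rsum_ext _ _ (fun _ => 0)), rsum_const.
      * unfold off_axis_point; simpl. field.
      * intros j _. unfold off_axis_point. simpl. ring.
    + right. rewrite coords_sumabs, rsum_split2 by auto.
      rewrite (rsum_ext _ _ (fun _ => 0)), rsum_const.
      * unfold off_axis_point, centre; simpl. rewrite !Rabs_pos_eq by lra.
        pose proof (INR_ge2 n Hn). pose proof (pow2_ge_0 (r - 7 / 10)). nra.
      * intros j _. unfold off_axis_point. simpl. apply Rabs_R0.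
  - intros [i [Hi [s [_ HM]]]].
    pose proof (HM 0%nat ltac:(lia)) as H0. pose proof (HM 1%nat ltac:(lia)) as H1.
    change (off_axis_point r 0) with (3 * r / 5) in H0.
    change (off_axis_point r 1) with (4 * r / 5) in H1.
    destruct (Nat.eqb_spec 0 i); destruct (Nat.eqb_spec 1 i); try lia; lra.
Qed.

Lemma argmin_value {T : Type} (dom : T -> Prop) (V : T -> R) (P : T -> Prop) M N :
  (forall K, argmin dom V K <-> P K) -> P M -> dom N -> V N = V M -> P N.
Proof.
  intros Hchar HM HN HV. apply Hchar. split; auto. intros K HK.
  rewrite HV. apply (proj2 (Hchar M) HM); auto.
Qed.

(* Otherwise H_n separates a point of E from a point off E: the sign s of falling4 makes
   E the set of minimisers of s H_n. *)
Lemma Hn_not_constant n r h lam : (2 <= n)%nat -> 0 < r -> 0 <= h ->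
  ~ (lam = 0 \/ lam = 2 \/ lam = 4 \/ lam = 6) ->
  Hn n h lam (off_axis_point r) <> Hn n h lam (axis_point r).
Proof.
  intros Hn Hr Hh Hlam Heq.
  assert (Hs : exists s, 0 < s * falling4 (lam / 2)).
  { destruct (Rtotal_order (falling4 (lam / 2)) 0) as [Hneg | [Hz | Hpos]].
    - exists (-1); lra.
    - exfalso. apply Hlam, falling4_half_zero, Hz.
    - exists 1; lra. }
  destruct Hs as [s Hs].
  destruct (off_axis_point_props n r h lam Hn Hr Hh) as [Hdom HnE]. apply HnE.
  apply (argmin_value _ _ _ (axis_point r) _ (argmin_scaled_Hn n r h lam s Hn Hr Hh Hs)); auto.
  - apply axis_point_in_E; lia.
  - rewrite Heq; auto.
Qed.

(* Points of the circumscribed sphere close to the vertex (1/2, ..., 1/2):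
   (c1, c2, 1/2, ..., 1/2) with c1 + c2 = 1 - d and c1^2 + c2^2 = 1/2. *)
Lemma near_vertex_point n d : (2 <= n)%nat -> 0 < d < 1 / 4 ->
  exists M, on_sphere n (sqrt (INR n) / 2) M /\ sumabs (coords M n) = INR n / 2 - d.
Proof.
  intros Hn Hd.
  set (q := sqrt (1 - (1 - d) ^ 2)).
  assert (Hq2 : q ^ 2 = 1 - (1 - d) ^ 2) by (apply pow2_sqrt; nra).
  assert (Hq0 : 0 <= q) by apply sqrt_pos.
  assert (Hqle : q <= 1 - d) by nra.
  set (M := fun j : nat => if Nat.eqb j 0 then (1 - d + q) / 2
                           else if Nat.eqb j 1 then (1 - d - q) / 2 else 1 / 2).
  assert (HnR : INR (n - 2) = INR n - 2) by (rewrite minus_INR by auto; simpl; ring).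
  assert (Hr2 : (sqrt (INR n) / 2) ^ 2 = INR n / 4)
    by (unfold Rdiv; rewrite Rpow_mult_distr, pow2_sqrt by apply pos_INR; field).
  exists M. split.
  - unfold on_sphere. rewrite rsum_split2 by auto.
    rewrite (rsum_ext _ _ (fun _ => (1 / 2) ^ 2)), rsum_const, HnR, Hr2.
    + unfold M; simpl. nra.
    + intros j _. reflexivity.
  - rewrite coords_sumabs, rsum_split2 by auto.
    rewrite (rsum_ext _ _ (fun _ => 1 / 2)), rsum_const, HnR.
    + unfold M; simpl. rewrite !Rabs_pos_eq by lra. field.
    + intros j _. apply Rabs_pos_eq; lra.
Qed.

(* When h = 0 and Gamma is the circumscribed sphere, H_n(., lam) is unbounded for lam < 0:
   near a vertex the smallest distance d gives the term d^(lam/2). *)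
Lemma Hn_unbounded n lam B : (2 <= n)%nat -> lam < 0 ->
  exists M, Hdom n (sqrt (INR n) / 2) 0 lam M /\ B < Hn n 0 lam M.
Proof.
  intros Hn Hl. set (k := lam / 2). assert (Hk : k < 0) by (unfold k; lra).
  set (T := (Rabs B + 1) / (- k) + 2).
  assert (HT : 2 <= T).
  { assert (0 <= (Rabs B + 1) / - k)
      by (apply Rlt_le, Rdiv_lt_0_compat; pose proof (Rabs_pos B); lra).
    unfold T; lra. }
  set (d := exp (- T)).
  assert (Hd : 0 < d < 1 / 4).
  { split; [apply exp_pos|]. unfold d. rewrite exp_Ropp.
    assert (Hexp2 : 4 < exp 2).
    { replace 2 with (1 + 1) by ring. rewrite exp_plus. pose proof (exp_ineq1 1 ltac:(lra)). nra. }
    assert (exp 2 <= exp T)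
      by (destruct HT as [HT|HT]; [left; apply exp_increasing; auto | right; f_equal; auto]).
    assert (/ exp T < / 4); [|lra].
    apply Rinv_lt_contravar; [apply Rmult_lt_0_compat; [lra | apply exp_pos] | lra]. }
  destruct (near_vertex_point n d Hn Hd) as [M [Hs Habs]].
  assert (Hgap : centre n (sqrt (INR n) / 2) 0 - sumabs (coords M n) = d).
  { unfold centre. rewrite Habs. unfold Rdiv at 1.
    rewrite Rpow_mult_distr, pow2_sqrt by apply pos_INR. field. }
  exists M. split; [apply Hdom_iff; split; [auto | right; lra]|].
  rewrite (Hn_sign_sum n (sqrt (INR n) / 2) 0 lam M Hs).
  eapply Rlt_le_trans; [|apply sign_sum_ge_min; intros; apply rpow_nonneg].
  rewrite Hgap. fold k. rewrite rpow_pos_eq by lra. unfold Rpower, d. rewrite ln_exp.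
  replace (k * - T) with (Rabs B + 1 + (- 2 * k)) by (unfold T; field; lra).
  pose proof (exp_ineq1 (Rabs B + 1 + - 2 * k) ltac:(pose proof (Rabs_pos B); lra)).
  pose proof (Rle_abs B). lra.
Qed.

Theorem theorem6p3 (n : nat) (r h : R) (Hn2 : (2 <= n)%nat) (Hr : 0 < r) (Hh : 0 <= h) :
  (* (1) lambda < 0 *)
  (forall lam, lam < 0 ->
     (forall M, is_min_at n r h lam M <-> in_E n r M) /\
     (h = 0 /\ r = sqrt (INR n) / 2 ->
        forall B, exists M, Hdom n r h lam M /\ B < Hn n h lam M) /\
     (~ (h = 0 /\ r = sqrt (INR n) / 2) ->
        forall M, is_max_at n r h lam M <-> in_D n r M)) /\
  (* (2) *)
  (forall lam,
     ((lam = 0 \/ lam = 2 \/ lam = 4 \/ lam = 6) <->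
      (forall M N, Hdom n r h lam M -> Hdom n r h lam N -> Hn n h lam M = Hn n h lam N)) /\
     ((0 < lam < 2 \/ 4 < lam < 6) ->
        (forall M, is_max_at n r h lam M <-> in_E n r M) /\
        (forall M, is_min_at n r h lam M <-> in_D n r M)) /\
     (2 < lam < 4 ->
        (forall M, is_min_at n r h lam M <-> in_E n r M) /\
        (forall M, is_max_at n r h lam M <-> in_D n r M))) /\
  (* (3) lambda > 6 *)
  (forall lam, 6 < lam ->
     (forall M, is_max_at n r h lam M <-> in_D n r M) /\
     (forall M, is_min_at n r h lam M <-> in_E n r M)).
Proof.
  assert (Hpos : forall lam, lam < 0 \/ 2 < lam < 4 \/ 6 < lam ->
    (forall M, is_min_at n r h lam M <-> in_E n r M) /\
    ((0 < lam \/ ~ (h = 0 /\ r = sqrt (INR n) / 2)) ->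
       forall M, is_max_at n r h lam M <-> in_D n r M)).
  { intros lam Hl. pose proof (falling4_pos lam Hl) as Hf. split.
    - intros M. rewrite (proj1 (is_min_at_scaled n r h lam M)). apply argmin_scaled_Hn; auto; lra.
    - intros Hc M. rewrite (proj1 (is_max_at_scaled n r h lam M)).
      apply argmax_scaled_Hn; auto; lra. }
  assert (Hneg : forall lam, 0 < lam < 2 \/ 4 < lam < 6 ->
    (forall M, is_max_at n r h lam M <-> in_E n r M) /\
    (forall M, is_min_at n r h lam M <-> in_D n r M)).
  { intros lam Hl. pose proof (falling4_neg lam Hl) as Hf. split; intros M.
    - rewrite (proj2 (is_max_at_scaled n r h lam M)). apply argmin_scaled_Hn; auto; lra.
    - rewrite (proj2 (is_min_at_scaled n r h lam M)). apply argmax_scaled_Hn; auto; lra. }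
  split; [|split].
  - intros lam Hl. destruct (Hpos lam (or_introl Hl)) as [Hmin Hmax].
    split; [auto | split; [|auto]].
    intros [-> ->] B. apply Hn_unbounded; auto.
  - intros lam. split; [split|split].
    + intros Hl. apply Hn_constant; auto.
    + intros Hc. apply NNPP. intros Hl. apply (Hn_not_constant n r h lam Hn2 Hr Hh Hl), Hc.
      * apply off_axis_point_props; auto.
      * apply in_E_Hdom, axis_point_in_E; auto; lia.
    + apply Hneg.
    + intros Hl. destruct (Hpos lam ltac:(lra)) as [Hmin Hmax]. split; [auto | apply Hmax; lra].
  - intros lam Hl. destruct (Hpos lam ltac:(lra)) as [Hmin Hmax]. split; [apply Hmax; lra | auto].
Qed.
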